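(* Let $\mathbb{K}$ be a field with algebraic closure $\overline{\mathbb{K}}$, $\nu$ a Krull valuation on $\mathbb{K}[x]$, $\mu$ a valuation on $\overline{\mathbb{K}}[x]$ extending $\nu$, $Q\in\mathbb{K}[x]$ a key polynomial for $\nu$ and $a\in\overline{\mathbb{K}}$ an optimizing root of $Q$. Then $\mu_{x-a}(f)=\nu_Q(f)$ for every $f\in\mathbb{K}[x]$.
   Context: Truncation: for a valuation $\nu$ on $L[x]$ ($L$ a field) and non-constant $q\in L[x]$, every $f$ has a unique $q$-expansion $f=f_0+f_1q+\dots+f_sq^s$ with $\deg f_i<\deg q$; set $\nu_q(f)=\min_i\nu(f_iq^i)$. Thus $\mu_{x-a}(\sum_i c_i(x-a)^i)=\min_i\{\mu(c_i)+i\mu(x-a)\}$ for $c_i\in\overline{\mathbb{K}}$. Key polynomials: for $\nu$ Krull and nonzero $f\in\mathbb{K}[x]$, with Hasse derivatives $\partial_bf=\sum_{i\ge b}\binom{i}{b}a_ix^{i-b}$ for $f=\sum a_ix^i$, set $\epsilon(f)=\max_{1\le b\le\deg f}(\nu(f)-\nu(\partial_bf))/b$ (in the divisible hull of the value group) if $\deg f>0$, and $\epsilon(f)=-\infty$ if $f$ is constant. A monic $Q$ is a key polynomial for $\nu$ if for all $f$, $\epsilon(f)\ge\epsilon(Q)$ implies $\deg f\ge\deg Q$. Optimizing root: for non-constant $f\in\mathbb{K}[x]$, $\delta(f)=\max\{\mu(x-c): c\in\overline{\mathbb{K}}, f(c)=0\}$, and a root $c$ of $f$ with $\mu(x-c)=\delta(f)$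 is an optimizing root. *)

From HB Require Import structures.
From mathcomp Require Import all_boot all_order all_algebra all_field.
Set Implicit Arguments. Unset Strict Implicit. Unset Printing Implicit Defensive.
Import Order.TTheory GRing.Theory Num.Theory.
Local Open Scope ring_scope.

(* Values of valuations: an ordered (divisible) group, realised as the additive
   group of an arbitrary real field R (every ordered abelian group embeds in
   one, by Hahn's embedding theorem).  [None] stands for +oo. *)
Section Vals.
Variable R : realFieldType.

Definition vle (a b : option R) : bool :=
  match b, a with
  | None, _ => true
  | Some _, None => false
  | Some y, Some x => x <= y
  end.
Definition vmin (a b : option R) : option R := if vle a b then a else b.
Definition vadd (a b : option R) : option R :=
  match a, b with Some x, Some y => Some (x + y) | _, _ => None end.

(* order on R ∪ {-oo}, None = -oo (used for epsilon) *)
Definition ele (a b : option R) : bool :=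
  match a, b with
  | None, _ => true
  | Some _, None => false
  | Some x, Some y => x <= y
  end.
Definition emax (a b : option R) : option R := if ele a b then b else a.
End Vals.

Record is_valuation (L : fieldType) (R : realFieldType)
    (v : {poly L} -> option R) : Prop := {
  val0 : v 0 = None;
  val_fin : forall f, f != 0 -> v f != None;
  val1 : v 1 = Some 0;
  valM : forall f g, v (f * g) = vadd (v f) (v g);
  valD : forall f g, vle (vmin (v f) (v g)) (v (f + g))
}.

(* q-expansion coefficients: f = sum_i f_i q^i with deg f_i < deg q *)
Definition qexp_coef (L : fieldType) (q f : {poly L}) (i : nat) : {poly L} :=
  (f %/ q ^+ i) %% q.

Definition trunc (L : fieldType) (R : realFieldType) (v : {poly L} -> option R)
    (q f : {poly L}) : option R :=
  \big[@vmin R/None]_(i < size f) v (qexp_coef q f i * q ^+ i).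

(* epsilon(f) = max_{1 <= b <= deg f} (nu(f) - nu(Hasse_b f)) / b, with
   None = -oo (value for constant f, or terms where nu(Hasse_b f) = +oo). *)
Definition eps_term (K : fieldType) (R : realFieldType) (v : {poly K} -> option R)
    (f : {poly K}) (b : nat) : option R :=
  match v f, v (nderivn b f) with
  | Some u, Some w => Some ((u - w) / b%:R)
  | _, _ => None
  end.
Definition eps (K : fieldType) (R : realFieldType) (v : {poly K} -> option R)
    (f : {poly K}) : option R :=
  \big[@emax R/None]_(1 <= b < size f) eps_term v f b.

Definition key_poly (K : fieldType) (R : realFieldType) (v : {poly K} -> option R)
    (Q : {poly K}) : Prop :=
  Q \is monic /\
  forall f : {poly K}, ele (eps v Q) (eps v f) -> (size Q <= size f)%N.

Definition optimizing_root (L : fieldType) (R : realFieldType)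
    (mu : {poly L} -> option R) (f : {poly L}) (c : L) : Prop :=
  (1 < size f)%N /\ root f c /\
  forall c', root f c' -> vle (mu ('X - c'%:P)) (mu ('X - c%:P)).

(* Write v(z) := mu(X - z) and d := v(a).  For a weight g, the Gauss valuation
   min_j (v(p_j) + j g) of polynomials over a valued domain is multiplicative, and
   the largest index at which the minimum is attained is additive.  Applied to
   F(X + Y) = sum_b (Hasse_b F) Y^b, a product of factors Y + (X - z), this gives
   eps(F) <= d when every root z of F has v(z) <= d, and eps(F) >= d when some
   root has v(z) >= d.  As a is an optimizing root of the key polynomial Q, every
   root z of a nonzero f with deg f < deg Q therefore has v(z) < d.  Applied next
   to f(X + a), a product of factors X + (a - z) over Kbar, it shows that f(X + a)
   has Gauss value mu(f) of weight d, attained only at index 0 when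
   deg f < deg Q, and attained last at some index m >= 1 when f = Q.  In the
   Q-expansion f = sum_i f_i Q^i, the term (f_i Q^i)(X + a) thus has Gauss value
   nu(f_i Q^i), attained last at index m i; these indices being distinct, the
   minimal terms cannot cancel at the largest of them, so f(X + a) has Gauss
   value min_i nu(f_i Q^i) = nu_Q(f).  That is mu_{X-a}(f), since the
   coefficients of f(X + a) are those of the (X - a)-expansion of f. *)

From HB Require Import structures.
From mathcomp Require Import all_boot all_order all_algebra all_field.
From mathcomp Require Import ring lra zify.
Set Implicit Arguments. Unset Strict Implicit. Unset Printing Implicit Defensive.
Import Order.TTheory GRing.Theory Num.Theory.
Local Open Scope ring_scope.

Section Values.
Variable R : realFieldType.
Implicit Types (a b c e : option R) (x y : R).

Definition vlt a b := ~~ vle b a.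

Lemma vle_refl a : vle a a.
Proof. by case: a => //= x; rewrite lexx. Qed.

Lemma vle_anti a b : vle a b -> vle b a -> a = b.
Proof. by case: a => [x|]; case: b => [y|] //= h1 h2; congr Some; apply/eqP; rewrite eq_le h1. Qed.

Lemma vle_trans b a c : vle a b -> vle b c -> vle a c.
Proof. by case: a => [x|]; case: b => [y|]; case: c => [z|] //=; apply: le_trans. Qed.

Lemma vlt_le_trans b a c : vlt a b -> vle b c -> vlt a c.
Proof.
rewrite /vlt; case: a => [x|]; case: b => [y|]; case: c => [z|] //=.
by rewrite -!ltNge; apply: lt_le_trans.
Qed.

Lemma vltW a b : vlt a b -> vle a b.
Proof. by rewrite /vlt; case: a => [x|]; case: b => [y|] //=; rewrite -ltNge => /ltW. Qed.

Lemma vle_min c a b : vle c (vmin a b) = vle c a && vle c b.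
Proof.
rewrite /vmin; case: ifP => hab; last first.
  by apply/idP/andP => [h|[]//]; split=> //; apply: vle_trans h (vltW (negbT hab)).
by apply/idP/andP => [h|[]//]; split=> //; apply: vle_trans h hab.
Qed.

Lemma vlt_min c a b : vlt c (vmin a b) = vlt c a && vlt c b.
Proof.
rewrite /vmin; case: ifP => hab; last first.
  by apply/idP/andP => [h|[]//]; split=> //; apply: vlt_le_trans h (vltW (negbT hab)).
by apply/idP/andP => [h|[]//]; split=> //; apply: vlt_le_trans h hab.
Qed.

Lemma vmin_lel a b : vle (vmin a b) a.
Proof. by rewrite /vmin; case: ifP => [_|/negbT/vltW //]; apply: vle_refl. Qed.

Lemma vmin_ler a b : vle (vmin a b) b.
Proof. by rewrite /vmin; case: ifP => // _; apply: vle_refl. Qed.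

Lemma vminC : commutative (@vmin R).
Proof. by move=> a b; apply: vle_anti; rewrite vle_min vmin_lel vmin_ler. Qed.

Lemma vminA : associative (@vmin R).
Proof.
move=> a b c; apply: vle_anti; rewrite !vle_min.
- by rewrite vmin_lel (vle_trans (vmin_ler _ _) (vmin_lel _ _))
     (vle_trans (vmin_ler _ _) (vmin_ler _ _)).
- by rewrite vmin_ler (vle_trans (vmin_lel _ _) (vmin_lel _ _))
     (vle_trans (vmin_lel _ _) (vmin_ler _ _)).
Qed.

Lemma vmin0l : left_id None (@vmin R).
Proof. by case. Qed.

Lemma vmin_l a b : vle a b -> vmin a b = a.
Proof. by rewrite /vmin => ->. Qed.

Lemma vmin_r a b : vle b a -> vmin a b = b.
Proof. by rewrite vminC; apply: vmin_l. Qed.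

HB.instance Definition _ :=
  Monoid.isComLaw.Build (option R) None (@vmin R) vminA vminC vmin0l.

Lemma vle_big_vmin (I : Type) (r : seq I) (P : pred I) (F : I -> option R) c :
  (forall i, P i -> vle c (F i)) -> vle c (\big[@vmin R/None]_(i <- r | P i) F i).
Proof.
move=> H; apply: (big_ind (vle c)) => //.
by move=> a b ha hb; rewrite vle_min ha.
Qed.

Lemma big_vmin_le (I : finType) (P : pred I) (F : I -> option R) i :
  P i -> vle (\big[@vmin R/None]_(j | P j) F j) (F i).
Proof. by move=> Pi; rewrite (bigD1 i) //= vmin_lel. Qed.

Lemma vleD a b c e : vle a c -> vle b e -> vle (vadd a b) (vadd c e).
Proof. by case: a => [x|]; case: b => [y|]; case: c => [z|]; case: e => [w|] //=; apply: lerD. Qed.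

Lemma vlt_leD x y b c : vlt (Some x) b -> vle (Some y) c -> vlt (Some (x + y)) (vadd b c).
Proof. by rewrite /vlt; case: b => [z|]; case: c => [w|] //=; rewrite -!ltNge; apply: ltr_leD. Qed.

Lemma vle_ltD x y b c : vle (Some x) b -> vlt (Some y) c -> vlt (Some (x + y)) (vadd b c).
Proof. by rewrite /vlt; case: b => [z|]; case: c => [w|] //=; rewrite -!ltNge; apply: ler_ltD. Qed.

Lemma ele_trans b a c : ele a b -> ele b c -> ele a c.
Proof. by case: a => [x|]; case: b => [y|]; case: c => [z|] //=; apply: le_trans. Qed.

Lemma ele_total a b : ~~ ele a b -> ele b a.
Proof. by case: a b => [x|] [y|] //=; rewrite -ltNge => /ltW. Qed.

Lemma ele_emax c a b : ele c (emax a b) = ele c a || ele c b.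
Proof.
rewrite /emax; case: ifP => hab; apply/idP/orP.
- by right.
- by case=> // /ele_trans; apply.
- by left.
- by case=> // /ele_trans; apply; apply/ele_total/negbT.
Qed.

Lemma emax_ele c a b : ele (emax a b) c = ele a c && ele b c.
Proof.
rewrite /emax; case: ifP => hab; apply/idP/andP => [|[]//].
- by move=> hbc; rewrite (ele_trans hab).
- by move=> hac; rewrite (ele_trans (ele_total (negbT hab))).
Qed.

Lemma ele_big_emax (r : seq nat) (F : nat -> option R) c i :
  i \in r -> ele c (F i) -> ele c (\big[@emax R/None]_(j <- r) F j).
Proof.
elim: r => [|j r IH] //; rewrite in_cons big_cons ele_emax => /orP[/eqP <- -> //|ir hi].
by rewrite IH ?orbT.
Qed.

Lemma big_emax_ele (r : seq nat) (F : nat -> option R) c :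
  (forall i, i \in r -> ele (F i) c) -> ele (\big[@emax R/None]_(j <- r) F j) c.
Proof.
elim: r => [|j r IH] H; first by rewrite big_nil.
by rewrite big_cons emax_ele H ?mem_head // IH // => i ir; rewrite H // in_cons ir orbT.
Qed.

End Values.

Record is_dom_valuation (A : idomainType) (R : realFieldType) (v : A -> option R) : Prop := {
  dval0 : v 0 = None;
  dval_fin : forall x, x != 0 -> v x != None;
  dval1 : v 1 = Some 0;
  dvalM : forall x y, v (x * y) = vadd (v x) (v y);
  dvalD : forall x y, vle (vmin (v x) (v y)) (v (x + y)) }.

Lemma is_valuation_dom (L : fieldType) (R : realFieldType) (w : {poly L} -> option R) :
  is_valuation w -> is_dom_valuation w.
Proof. by case=> *; constructor. Qed.

Lemma is_valuation_const (L : fieldType) (R : realFieldType) (w : {poly L} -> option R) :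
  is_valuation w -> is_dom_valuation (fun c : L => w c%:P).
Proof.
case=> h0 hf h1 hM hD; constructor => //.
- by move=> x hx; apply: hf; rewrite polyC_eq0.
- by move=> x y; rewrite polyCM.
- by move=> x y; rewrite polyCD.
Qed.

Section DomainValuation.
Variables (R : realFieldType) (A : idomainType) (v : A -> option R).
Hypothesis hv : is_dom_valuation v.

Lemma dvalN x : v (- x) = v x.
Proof.
have hm1 : v (-1) != None by apply: (dval_fin hv); rewrite oppr_eq0 oner_eq0.
have := dvalM hv (-1) (-1); rewrite mulrNN mulr1 (dval1 hv).
case E: (v (-1)) hm1 => [u|] //= _ [u0].
have {u0} u_0 : u = 0 by lra.
by rewrite -mulN1r (dvalM hv) E u_0; case: (v x) => //= w; rewrite add0r.
Qed.

Lemma vle_dval_sum (I : Type) (r : seq I) (P : pred I) (F : I -> A) c :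
  (forall i, P i -> vle c (v (F i))) -> vle c (v (\sum_(i <- r | P i) F i)).
Proof.
move=> H; apply: (big_ind (fun x => vle c (v x))) => //; first by rewrite (dval0 hv).
by move=> x y hx hy; apply: vle_trans (dvalD hv x y); rewrite vle_min hx.
Qed.

Lemma vlt_dval_sum (I : Type) (r : seq I) (P : pred I) (F : I -> A) c :
  c != None -> (forall i, P i -> vlt c (v (F i))) -> vlt c (v (\sum_(i <- r | P i) F i)).
Proof.
move=> cfin H; apply: (big_ind (fun x => vlt c (v x))) => //.
  by rewrite (dval0 hv) /vlt; case: c {H} cfin.
by move=> x y hx hy; apply: vlt_le_trans (dvalD hv x y); rewrite vlt_min hx.
Qed.

Lemma dvalD_dominant x y l : v x = Some l -> vlt (Some l) (v y) -> v (x + y) = Some l.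
Proof.
move=> hx hy; apply: vle_anti; last first.
  by apply: vle_trans (dvalD hv x y); rewrite vle_min hx vle_refl vltW.
have := dvalD hv (x + y) (- y); rewrite addrK dvalN hx.
apply: contraTT => hxy; rewrite -/(vlt _ _) vlt_min hy andbT.
by case: (v (x + y)) hxy => //= w; rewrite -ltNge.
Qed.

Lemma dval_exp x u n : v x = Some u -> v (x ^+ n) = Some (n%:R * u).
Proof.
move=> hx; elim: n => [|n IH]; first by rewrite expr0 mul0r (dval1 hv).
by rewrite exprS (dvalM hv) hx IH /= -addn1 natrD mulrDl mul1r addrC.
Qed.

Lemma dval_prod (I : Type) (r : seq I) (F : I -> A) (w : I -> R) :
  (forall i, v (F i) = Some (w i)) -> v (\prod_(i <- r) F i) = Some (\sum_(i <- r) w i).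
Proof.
move=> H; elim: r => [|i r IH]; first by rewrite !big_nil (dval1 hv).
by rewrite !big_cons (dvalM hv) H IH.
Qed.

End DomainValuation.

Section GaussValuation.
Variables (R : realFieldType) (A : idomainType) (v : A -> option R).
Hypothesis hv : is_dom_valuation v.
Variable g : R.

Definition gauss (p : {poly A}) : option R :=
  \big[@vmin R/None]_(j < size p) vadd (v p`_j) (Some (j%:R * g)).

Lemma gauss0 : gauss 0 = None.
Proof. by rewrite /gauss size_poly0 big_ord0. Qed.

Definition gauss_vertex (p : {poly A}) (t : nat) (l : R) :=
  [/\ v p`_t = Some (l - t%:R * g),
      forall j, vle (Some (l - j%:R * g)) (v p`_j)
    & forall j, (t < j)%N -> vlt (Some (l - j%:R * g)) (v p`_j)].

Lemma gauss_vertexE p t l : gauss_vertex p t l -> gauss p = Some l.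
Proof.
case=> ht hge _; have tp : (t < size p)%N.
  by rewrite ltnNge; apply/negP => /(nth_default 0) pt; rewrite pt (dval0 hv) in ht.
apply: vle_anti; last first.
  apply: vle_big_vmin => j _; have := vleD (hge j) (vle_refl (Some (j%:R * g))).
  by rewrite /= subrK.
rewrite /gauss; apply: vle_trans (big_vmin_le _ (i := Ordinal tp) isT) _.
by rewrite /= ht /= subrK lexx.
Qed.

Lemma gauss_vertexM p q t1 l1 t2 l2 :
  gauss_vertex p t1 l1 -> gauss_vertex q t2 l2 -> gauss_vertex (p * q) (t1 + t2) (l1 + l2).
Proof.
case=> [e1 g1 s1] [e2 g2 s2].
have split_line j k : (j <= k)%N ->
    l1 + l2 - k%:R * g = (l1 - j%:R * g) + (l2 - (k - j)%:R * g).
  by move=> jk; rewrite natrB //; ring.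
have lbound k (i : 'I_k.+1) : vle (Some (l1 + l2 - k%:R * g)) (v (p`_i * q`_(k - i))).
  by rewrite (split_line i k (leq_ord i)) (dvalM hv); exact: vleD (g1 _) (g2 _).
split.
- have ht : (t1 < (t1 + t2).+1)%N by rewrite ltnS leq_addr.
  rewrite coefM (bigD1 (Ordinal ht)) //=; apply: (dvalD_dominant hv).
    by rewrite (dvalM hv) addKn e1 e2 /= natrD; congr Some; ring.
  apply: (vlt_dval_sum hv) => // i /= hi; rewrite (split_line i (t1 + t2) (leq_ord i)) (dvalM hv).
  have [lt|le] := ltnP t1 i; first by apply: vlt_leD; [apply: s1 | apply: g2].
  apply: vle_ltD; first exact: g1.
  by apply: s2; move: hi le (ltn_ord i); rewrite -val_eqE /=; lia.
- by move=> k; rewrite coefM; apply: (vle_dval_sum hv) => i _; apply: lbound.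
- move=> k hk; rewrite coefM; apply: (vlt_dval_sum hv) => // i _.
  rewrite (split_line i k (leq_ord i)) (dvalM hv).
  have [lt|le] := ltnP t1 i; first by apply: vlt_leD; [apply: s1 | apply: g2].
  apply: vle_ltD; first exact: g1.
  by apply: s2; move: (leq_ord i); lia.
Qed.

Lemma gauss_vertexC c u : v c = Some u -> gauss_vertex c%:P 0 u.
Proof.
move=> hc; split=> [|[|j]|[|j]] //=; rewrite coefC /= ?hc ?mul0r ?subr0 ?vle_refl //.
all: by rewrite (dval0 hv).
Qed.

Lemma gauss_vertex_prod (I : eqType) (r : seq I) (F : I -> {poly A}) tt ll :
  (forall i, i \in r -> gauss_vertex (F i) (tt i) (ll i)) ->
  gauss_vertex (\prod_(i <- r) F i) (\sum_(i <- r) tt i)%N (\sum_(i <- r) ll i).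
Proof.
elim: r => [|i r IH] H; first by rewrite !big_nil; apply: gauss_vertexC (dval1 hv).
rewrite !big_cons; apply: gauss_vertexM; first by apply: H; rewrite mem_head.
by apply: IH => j jr; apply: H; rewrite in_cons jr orbT.
Qed.

Lemma gauss_vertexX p t l n : gauss_vertex p t l -> gauss_vertex (p ^+ n) (t * n) (n%:R * l).
Proof.
move=> H; elim: n => [|n IH]; first by rewrite expr0 muln0 mul0r; apply: gauss_vertexC (dval1 hv).
by rewrite exprS mulnS -addn1 natrD mulrDl mul1r addrC; apply: gauss_vertexM.
Qed.

Lemma gauss_vertex_XaddC_ge b : vle (Some g) (v b) -> gauss_vertex ('X + b%:P) 1 g.
Proof.
move=> hb; split=> [|[|[|j]]|[|[|j]]] //=; rewrite coefD coefX coefC /= ?add0r ?addr0.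
- by rewrite (dval1 hv) mul1r subrr.
- by rewrite mul0r subr0.
- by rewrite (dval1 hv) mul1r subrr /= lexx.
- by rewrite (dval0 hv).
- by rewrite (dval0 hv).
Qed.

Lemma gauss_vertex_XaddC_lt b u : v b = Some u -> u < g -> gauss_vertex ('X + b%:P) 0 u.
Proof.
move=> hb ug; split=> [|[|[|j]]|[|[|j]]] //=; rewrite coefD coefX coefC /= ?add0r ?addr0.
- by rewrite hb mul0r subr0.
- by rewrite hb mul0r subr0 /= lexx.
- by rewrite (dval1 hv) mul1r /= subr_le0 ltW.
- by rewrite (dval0 hv).
- by rewrite (dval1 hv) mul1r /vlt /= -ltNge subr_lt0.
- by rewrite (dval0 hv).
Qed.

Lemma gauss_vertexD p q tp lp tq lq :
  gauss_vertex p tp lp -> gauss_vertex q tq lq -> (lp < lq) || (lp == lq) && (tq < tp)%N ->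
  gauss_vertex (p + q) tp lp.
Proof.
case=> ep gp sp [eq gq sq] above.
have le_pq : lp <= lq by case/orP: above => [/ltW|/andP[/eqP -> _]].
have q_ge j : vle (Some (lp - j%:R * g)) (v q`_j).
  by apply: vle_trans (gq j); rewrite /= lerD2r.
have q_gt j : (tp <= j)%N -> vlt (Some (lp - j%:R * g)) (v q`_j).
  move=> hj; case/orP: above => [lt|/andP[/eqP -> lt]]; last by apply: sq; apply: leq_trans hj.
  by apply: vlt_le_trans (gq j); rewrite /vlt /= -ltNge ltrD2r.
split.
- by rewrite coefD; apply: (dvalD_dominant hv) => //; apply: q_gt.
- by move=> j; rewrite coefD; apply: vle_trans (dvalD hv _ _); rewrite vle_min gp q_ge.
- move=> j hj; rewrite coefD; apply: vlt_le_trans (dvalD hv _ _).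
  by rewrite vlt_min sp // q_gt // ltnW.
Qed.

Lemma gauss_sum n (P : nat -> {poly A}) (t : nat -> nat) :
  {homo t : i j / (i < j)%N} ->
  (forall i, P i != 0 -> exists l, gauss_vertex (P i) (t i) l) ->
  gauss (\sum_(i < n) P i) = \big[@vmin R/None]_(i < n) gauss (P i).
Proof.
move=> t_incr hP.
suff [[-> ->] | [j [l [_ hj ->]]]] :
    (\sum_(i < n) P i = 0 /\ \big[@vmin R/None]_(i < n) gauss (P i) = None)
    \/ exists j l, [/\ (j < n)%N, gauss_vertex (\sum_(i < n) P i) (t j) l
                     & \big[@vmin R/None]_(i < n) gauss (P i) = Some l].
- exact: gauss0.
- exact: gauss_vertexE hj.
elim: n => [|n IH]; first by left; rewrite !big_ord0.
rewrite !big_ord_recr /=.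
have [P0|/hP [ln hn]] := eqVneq (P n) 0.
  rewrite P0 addr0 gauss0 Monoid.mulm1.
  case: IH => [|[j [l [jn hj hl]]]]; first by left.
  by right; exists j, l; rewrite ltnS ltnW.
rewrite (gauss_vertexE hn); right.
case: IH => [[-> ->]|[j [l [jn hj ->]]]].
  by exists n, ln; rewrite add0r Monoid.mul1m.
have tjn := t_incr _ _ jn.
have [ln_le|l_lt] := leP ln l.
  exists n, ln; split=> //; last exact: vmin_r.
  by rewrite addrC; apply: gauss_vertexD hn hj _; rewrite tjn andbT orbC -le_eqVlt.
exists j, l; split; first exact: ltnW.
  by apply: gauss_vertexD hj hn _; rewrite l_lt.
by apply: vmin_l; apply: ltW.
Qed.

End GaussValuation.

Lemma qexp_partial (L : fieldType) (q f : {poly L}) n :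
  f = \sum_(i < n) qexp_coef q f i * q ^+ i + (f %/ q ^+ n) * q ^+ n.
Proof.
elim: n => [|n IH]; first by rewrite big_ord0 add0r expr0 divp1 mulr1.
rewrite big_ord_recr /= -addrA {1}IH; congr (_ + _).
rewrite {1}(divp_eq (f %/ q ^+ n) q) divp_divl -exprSr /qexp_coef.
by rewrite mulrDl addrC -mulrA -exprS.
Qed.

Lemma qexp_expansion (L : fieldType) (q f : {poly L}) : (1 < size q)%N ->
  f = \sum_(i < size f) qexp_coef q f i * q ^+ i.
Proof.
move=> hq; rewrite {1}(qexp_partial q f (size f)) divp_small ?mul0r ?addr0 //.
have qn0 : q != 0 by rewrite -size_poly_gt0 ltnW.
have qf_gt0 : (0 < size (q ^+ size f))%N by rewrite size_poly_gt0 expf_neq0.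
rewrite -(prednK qf_gt0) size_exp ltnS leq_pmull //.
by rewrite -subn1 subn_gt0.
Qed.

Lemma qexp_coef_XsubC (L : fieldType) (a : L) (F : {poly L}) i :
  qexp_coef ('X - a%:P) F i = ((F \Po ('X + a%:P))`_i)%:P.
Proof.
set p := F \Po ('X + a%:P).
have hF : F = p \Po ('X - a%:P) by rewrite comp_polyXaddC_K.
have hdiv : F %/ ('X - a%:P) ^+ i = (p %/ 'X^i) \Po ('X - a%:P).
  rewrite {1}hF {1}(divp_eq p 'X^i) comp_polyD comp_polyM.
  have -> : 'X^i \Po ('X - a%:P) = ('X - a%:P) ^+ i.
    by rewrite (rmorphXn (comp_poly ('X - a%:P))) /= comp_polyX.
  apply: divp_addl_mul_small.
  rewrite size_comp_poly2 ?size_XsubC // size_exp_XsubC -(size_polyXn L i).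
  by rewrite ltn_modpN0 // monic_neq0 ?monicXn.
rewrite /qexp_coef hdiv modp_XsubC horner_comp !hornerE subrr horner_coef0.
by rewrite -Pdiv.IdomainMonic.drop_poly_divp coef_drop_poly add0n.
Qed.

(* [F(X + Y)] as a polynomial in [Y] with coefficients in [L[X]]. *)
Definition taylor (L : comNzRingType) : {rmorphism {poly L} -> {poly {poly L}}} :=
  comp_poly ('X + ('X)%:P) \o map_poly (@polyC L).
Arguments taylor {L}.

Lemma coef_taylor (L : comNzRingType) (F : {poly L}) b : (taylor F)`_b = F^`N(b).
Proof.
rewrite /taylor /=; elim/poly_ind: F b => [|F c IH] b.
  by rewrite rmorph0 comp_poly0 coef0 /nderivn size_poly0 /= poly_def big_ord0.
rewrite rmorphD rmorphM /= map_polyX map_polyC /= comp_polyD comp_polyM comp_polyX comp_polyC.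
rewrite mulrDr coefD coefD coefMX coefMC coefC.
case: b => [|b] /=; first by rewrite nderivn0 IH nderivn0 add0r.
by rewrite addr0 !IH nderivnMXaddC.
Qed.

Lemma taylorC (L : comNzRingType) (c : L) : taylor c%:P = (c%:P)%:P.
Proof. by rewrite /taylor /= map_polyC comp_polyC. Qed.

Lemma taylor_XsubC (L : comNzRingType) (z : L) : taylor ('X - z%:P) = 'X + ('X - z%:P)%:P.
Proof.
rewrite /taylor /= rmorphB /= map_polyX map_polyC comp_polyB comp_polyX comp_polyC.
by rewrite polyCB addrA.
Qed.

Section PolyValuation.
Variables (L : fieldType) (R : realFieldType) (mu : {poly L} -> option R).
Hypothesis Hmu : is_valuation mu.
Let hmu := is_valuation_dom Hmu.

Definition mval (F : {poly L}) : R := odflt 0 (mu F).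

Lemma mvalE F : F != 0 -> mu F = Some (mval F).
Proof. by move=> /(val_fin Hmu); rewrite /mval; case: (mu F). Qed.

Definition vXsubC (z : L) : R := mval ('X - z%:P).

Lemma vXsubCE z : mu ('X - z%:P) = Some (vXsubC z).
Proof. by rewrite mvalE ?polyXsubC_eq0. Qed.

Lemma mvalM F G : F != 0 -> G != 0 -> mval (F * G) = mval F + mval G.
Proof. by move=> F0 G0; rewrite /mval (dvalM hmu) !mvalE. Qed.

Lemma mvalX F n : F != 0 -> mval (F ^+ n) = n%:R * mval F.
Proof. by move=> F0; rewrite /mval (dval_exp hmu _ (mvalE F0)). Qed.

Lemma mval_factor lc r : lc != 0 ->
  mval (lc%:P * \prod_(z <- r) ('X - z%:P)) = mval lc%:P + \sum_(z <- r) vXsubC z.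
Proof. by move=> lc0; rewrite /mval (dvalM hmu) mvalE ?polyC_eq0 // (dval_prod hmu _ vXsubCE). Qed.

Lemma trunc_XsubC a F :
  trunc mu ('X - a%:P) F = gauss (fun c => mu c%:P) (vXsubC a) (F \Po ('X + a%:P)).
Proof.
rewrite /trunc /gauss size_comp_poly2 ?size_XaddC //; apply: eq_bigr => i _.
by rewrite qexp_coef_XsubC (dvalM hmu) (dval_exp hmu _ (vXsubCE a)).
Qed.

End PolyValuation.

Section ClosedFieldValuation.
Variables (L : closedFieldType) (R : realFieldType) (mu : {poly L} -> option R).
Hypothesis Hmu : is_valuation mu.
Let hmu := is_valuation_dom Hmu.
Let hmuC := is_valuation_const Hmu.
Local Notation vXsubC := (vXsubC mu).

Lemma poly_factor (F : {poly L}) : F != 0 -> exists lc r,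
  [/\ lc != 0, F = lc%:P * \prod_(z <- r) ('X - z%:P) & forall z, root F z = (z \in r)].
Proof.
move=> F0; have [r Fr] := closed_field_poly_normal F.
have lc0 : lead_coef F != 0 by rewrite lead_coef_eq0.
exists (lead_coef F), r; split; rewrite ?mul_polyC -?Fr //.
by move=> z; rewrite {1}Fr rootZ // root_prod_XsubC.
Qed.

Lemma taylor_vertex_XsubC d z :
  gauss_vertex mu d (taylor ('X - z%:P)) (d <= vXsubC z)%R (Num.min (vXsubC z) d).
Proof.
rewrite taylor_XsubC; case: leP => hz.
  by apply: (gauss_vertex_XaddC_ge hmu); rewrite (vXsubCE Hmu).
exact: (gauss_vertex_XaddC_lt hmu (vXsubCE Hmu z)).
Qed.

Lemma taylor_vertex d F : F != 0 -> exists t l,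
  [/\ gauss_vertex mu d (taylor F) t l,
      (forall z, root F z -> vXsubC z <= d) -> l = mval mu F
    & forall z, root F z -> d <= vXsubC z -> (0 < t)%N].
Proof.
move=> /poly_factor [lc [r [lc0 -> rootE]]].
exists (\sum_(z <- r) ((d <= vXsubC z)%R : nat))%N,
  (mval mu lc%:P + \sum_(z <- r) Num.min (vXsubC z) d); split.
- rewrite rmorphM rmorph_prod taylorC -(add0n (\sum_(z <- r) _)%N).
  apply: (gauss_vertexM hmu); first by apply/(gauss_vertexC hmu)/(mvalE Hmu); rewrite polyC_eq0.
  by apply: (gauss_vertex_prod hmu) => z _; apply: taylor_vertex_XsubC.
- move=> le_d; rewrite (mval_factor Hmu) //; congr (_ + _).
  by apply: eq_big_seq => z; rewrite -rootE => /le_d /min_idPl.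
- by move=> z; rewrite rootE => zr hz; rewrite (big_rem z) //= hz.
Qed.

Lemma eps_le_of_roots F d : F != 0 -> (forall z, root F z -> vXsubC z <= d) ->
  ele (eps mu F) (Some d).
Proof.
move=> F0 le_d; have [t [l [[_ hge _] lE _]]] := taylor_vertex d F0.
apply: big_emax_ele => b; rewrite mem_index_iota => /andP[b1 _].
rewrite /eps_term (mvalE Hmu F0); have := hge b; rewrite coef_taylor (lE le_d).
case: (mu _) => [w|] //= hw.
have b0 : 0 < (b%:R : R) by rewrite ltr0n.
by rewrite ler_pdivrMr //; lra.
Qed.

Lemma eps_ge_of_root F z d : F != 0 -> root F z -> d <= vXsubC z ->
  ele (Some d) (eps mu F).
Proof.
move=> F0 Fz hz; have [t [l [[ht hge _] _ /(_ z Fz hz) t0]]] := taylor_vertex d F0.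
have lF : l <= mval mu F.
  by have := hge 0%N; rewrite coef_taylor nderivn0 (mvalE Hmu F0) mul0r subr0.
rewrite coef_taylor in ht.
have tF : (t < size F)%N.
  by rewrite ltnNge; apply/negP => /nderivn_poly0 Ft; rewrite Ft (dval0 hmu) in ht.
apply: (ele_big_emax (i := t)); first by rewrite mem_index_iota t0.
have t_gt0 : 0 < (t%:R : R) by rewrite ltr0n.
by rewrite /eps_term (mvalE Hmu F0) ht /= ler_pdivlMr //; lra.
Qed.

Lemma shift_vertex_XsubC a z : vXsubC z <= vXsubC a ->
  gauss_vertex (fun c => mu c%:P) (vXsubC a) (('X - z%:P) \Po ('X + a%:P))
    (vXsubC a <= vXsubC z)%R (vXsubC z).
Proof.
move=> le_za; have azE : (a - z)%:P = ('X - z%:P) + - ('X - a%:P) by rewrite polyCB; ring.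
rewrite comp_polyB comp_polyX comp_polyC -addrA -polyCB.
case: leP => hz.
  have -> : vXsubC z = vXsubC a by apply/eqP; rewrite eq_le le_za hz.
  apply: (gauss_vertex_XaddC_ge hmuC); rewrite /= azE.
  apply: vle_trans (dvalD hmu _ _); rewrite vle_min (dvalN hmu) !(vXsubCE Hmu) /=.
  by rewrite hz lexx.
apply: (gauss_vertex_XaddC_lt hmuC) => //=; rewrite azE.
apply: (dvalD_dominant hmu (vXsubCE Hmu z)).
by rewrite (dvalN hmu) (vXsubCE Hmu) /vlt /= -ltNge.
Qed.

Lemma shift_vertex a F : F != 0 -> (forall z, root F z -> vXsubC z <= vXsubC a) ->
  exists t, gauss_vertex (fun c => mu c%:P) (vXsubC a) (F \Po ('X + a%:P)) t (mval mu F)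
    /\ ((0 < t)%N <-> exists2 z, root F z & vXsubC a <= vXsubC z).
Proof.
move=> /poly_factor [lc [r [lc0 -> rootE]]] le_a.
exists (\sum_(z <- r) ((vXsubC a <= vXsubC z)%R : nat))%N; split.
- rewrite (mval_factor Hmu) // comp_polyM comp_polyC rmorph_prod.
  rewrite -(add0n (\sum_(z <- r) _)%N); apply: (gauss_vertexM hmuC).
    by apply/(gauss_vertexC hmuC)/(mvalE Hmu); rewrite polyC_eq0.
  apply: (gauss_vertex_prod hmuC) => z; rewrite -rootE => /le_a.
  exact: shift_vertex_XsubC.
- split=> [|[z]]; last by rewrite rootE => zr hz; rewrite (big_rem z) //= hz.
  rewrite lt0n sum_nat_seq_eq0 => /allPn [z zr].
  by case: leP => // hz _; exists z; rewrite ?rootE.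
Qed.

End ClosedFieldValuation.

Section KeyPolynomialTruncation.
Variables (K : fieldType) (L : closedFieldType) (iota : {rmorphism K -> L}).
Variables (R : realFieldType) (nu : {poly K} -> option R) (mu : {poly L} -> option R).
Hypothesis Hmu : is_valuation mu.
Hypothesis Hext : forall f, mu (map_poly iota f) = nu f.
Variables (Q : {poly K}) (a : L).
Hypothesis HQ : key_poly nu Q.
Hypothesis Ha : optimizing_root mu (map_poly iota Q) a.
Let hmu := is_valuation_dom Hmu.
Let hmuC := is_valuation_const Hmu.
Local Notation d := (vXsubC mu a).
Local Notation muC := (fun c : L => mu c%:P).
Local Notation shift F := (F \Po ('X + a%:P)).

Lemma eps_map f : eps nu f = eps mu (map_poly iota f).
Proof.
rewrite /eps /eps_term size_map_poly; apply: eq_bigr => b _.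
by rewrite nderivn_map !Hext.
Qed.

Lemma key_poly_neq0 : Q != 0.
Proof. by case: HQ => /monic_neq0. Qed.

Lemma key_roots_le z : root (map_poly iota Q) z -> vXsubC mu z <= d.
Proof. by case: Ha => _ [_ H] /H; rewrite !(vXsubCE Hmu). Qed.

Lemma roots_lt_of_size_lt (f : {poly K}) z : f != 0 -> (size f < size Q)%N ->
  root (map_poly iota f) z -> vXsubC mu z < d.
Proof.
move=> f0 hs hz; rewrite ltNge; apply/negP => hdz.
have epsQ : ele (eps nu Q) (Some d).
  by rewrite eps_map; apply: (eps_le_of_roots Hmu) key_roots_le; rewrite map_poly_eq0 key_poly_neq0.
have epsf : ele (Some d) (eps nu f).
  by rewrite eps_map; apply: (eps_ge_of_root Hmu) hz hdz; rewrite map_poly_eq0.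
by have := HQ.2 f (ele_trans epsQ epsf); rewrite leqNgt hs.
Qed.

Lemma shift_vertex_low (f : {poly K}) : f != 0 -> (size f < size Q)%N ->
  gauss_vertex muC d (shift (map_poly iota f)) 0 (mval mu (map_poly iota f)).
Proof.
move=> f0 hs; have F0 : map_poly iota f != 0 by rewrite map_poly_eq0.
have [t [ht tE]] := shift_vertex Hmu F0 (fun z hz => ltW (roots_lt_of_size_lt f0 hs hz)).
suff t0 : t = 0%N by rewrite -t0.
apply/eqP; rewrite -leqn0 leqNgt; apply/negP => /tE [z hz].
by rewrite leNgt (roots_lt_of_size_lt f0 hs hz).
Qed.

Lemma shift_vertex_key : exists2 m, (0 < m)%N &
  gauss_vertex muC d (shift (map_poly iota Q)) m (mval mu (map_poly iota Q)).
Proof.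
have Q0 : map_poly iota Q != 0 by rewrite map_poly_eq0 key_poly_neq0.
have [t [ht tE]] := shift_vertex Hmu Q0 key_roots_le.
by exists t => //; apply/tE; exists a; [case: Ha => _ [] | rewrite lexx].
Qed.

Lemma shift_vertex_low_mul_key m (f : {poly K}) i :
  gauss_vertex muC d (shift (map_poly iota Q)) m (mval mu (map_poly iota Q)) ->
  f != 0 -> (size f < size Q)%N ->
  gauss_vertex muC d (shift (map_poly iota (f * Q ^+ i)))
    (m * i)%N (mval mu (map_poly iota (f * Q ^+ i))).
Proof.
move=> hQ f0 hs; have Q0 : map_poly iota Q != 0 by rewrite map_poly_eq0 key_poly_neq0.
have F0 : map_poly iota f != 0 by rewrite map_poly_eq0.
rewrite !rmorphM !rmorphXn /= (mvalM Hmu) ?expf_neq0 // (mvalX Hmu) //.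
rewrite -(add0n (m * i)%N); apply: (gauss_vertexM hmuC); last exact: (gauss_vertexX hmuC).
exact: shift_vertex_low.
Qed.

Lemma trunc_XsubC_key_poly f : trunc mu ('X - a%:P) (map_poly iota f) = trunc nu Q f.
Proof.
have [m m0 hQ] := shift_vertex_key.
have Q1 : (1 < size Q)%N by case: Ha; rewrite size_map_poly.
pose P i := shift (map_poly iota (qexp_coef Q f i * Q ^+ i)).
have vertexP i : qexp_coef Q f i != 0 ->
    gauss_vertex muC d (P i) (m * i)%N (mval mu (map_poly iota (qexp_coef Q f i * Q ^+ i))).
  by move=> fi0; apply: shift_vertex_low_mul_key; rewrite // ltn_modp key_poly_neq0.
rewrite (trunc_XsubC Hmu) {1}(qexp_expansion f Q1) rmorph_sum raddf_sum /=.
rewrite (@gauss_sum _ _ _ hmuC _ _ P (muln m)) => [|i j|i]; last 2 first.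
- by rewrite ltn_pmul2l.
- have [fi0|/vertexP hi _] := eqVneq (qexp_coef Q f i) 0; last by eexists; apply: hi.
  by rewrite /P fi0 mul0r rmorph0 comp_poly0 eqxx.
apply: eq_bigr => i _; rewrite -Hext.
have [fi0|/[dup] fi0 /vertexP/(gauss_vertexE hmuC) ->] := eqVneq (qexp_coef Q f i) 0.
  by rewrite /P fi0 mul0r !rmorph0 gauss0 (dval0 hmu).
by rewrite (mvalE Hmu) // map_poly_eq0 mulf_neq0 ?expf_neq0 ?key_poly_neq0.
Qed.

End KeyPolynomialTruncation.

Unset Implicit Arguments.
Set Strict Implicit.

Theorem theorem3p1 (K : fieldType) (Kbar : closedFieldType)
  (iota : {rmorphism K -> Kbar})
  (Kbar_alg : forall z : Kbar, exists p : {poly K},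
      p != 0 /\ root (map_poly iota p) z)
  (R : realFieldType) (nu : {poly K} -> option R) (mu : {poly Kbar} -> option R)
  (Hnu : is_valuation nu) (Hmu : is_valuation mu)
  (Hext : forall f : {poly K}, mu (map_poly iota f) = nu f)
  (Q : {poly K}) (HQ : key_poly nu Q)
  (a : Kbar) (Ha : optimizing_root mu (map_poly iota Q) a) :
  forall f : {poly K},
    trunc mu ('X - a%:P) (map_poly iota f) = trunc nu Q f.
Proof. by move=> f; apply: (trunc_XsubC_key_poly Hmu Hext HQ Ha). Qed.
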